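(* Let $n$ be a positive integer and let $A$ be a binary $n\times n$ matrix in which every row has weight at least $9$. Then there is a set $S$ of columns of $A$ with $|S|\le 0.49\,n$ such that, in the $n\times |S|$ submatrix of $A$ formed by the columns in $S$, every row has weight at least $2$.
   Context: A binary matrix has entries in $\{0,1\}$. The weight of a binary vector (row or column) is its number of $1$-entries. *)

From mathcomp Require Import all_boot all_algebra.
Set Implicit Arguments. Unset Strict Implicit. Unset Printing Implicit Defensive.

Definition row_weight (m n : nat) (A : 'M[bool]_(m, n)) (i : 'I_m) : nat :=
  #|[set j : 'I_n | A i j]|.

Definition sub_row_weight (m n : nat) (A : 'M[bool]_(m, n)) (S : {set 'I_n})
  (i : 'I_m) : nat :=
  #|[set j in S | A i j]|.

From mathcomp Require Import all_boot all_algebra zify ring.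

(* Colour every column uniformly at random with one of 5 colours and let T be
   the set of columns with one of 2 distinguished colours, so that each column
   lies in T with probability 2/5.  Fix 9 ones R_i in each row i and complete
   T by adding 2 - |R_i ∩ T| further columns of R_i for every row.  The
   expected size of T is 2n/5, and the expected number of columns added for a
   row is 2 (3/5)^9 + 9 (2/5) (3/5)^8 = 24 * 3^8 / 5^9 < 0.081, so some
   colouring gives a completed set of at most 0.49 n columns.  Expectations
   are sums over all 5^n colourings. *)

Set Implicit Arguments.
Unset Strict Implicit.
Unset Printing Implicit Defensive.

Lemma exists_subset_card (T : finType) (A : {set T}) k :
  k <= #|A| -> exists2 B : {set T}, B \subset A & #|B| = k.
Proof.
case/card_geqP=> s [s_uniq s_size sA]; exists [set x in s].
  by apply/subsetP=> x; rewrite inE => /sA.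
by rewrite cardsE (card_uniqP s_uniq) s_size.
Qed.

Lemma leq_card_bigcup (I T : finType) (F : I -> {set T}) :
  #|\bigcup_i F i| <= \sum_i #|F i|.
Proof.
elim/big_rec2: _ => [|i A n _ leAn]; first by rewrite cards0.
by apply: leq_trans (leq_card_setU _ _) _; rewrite leq_add2l.
Qed.

Lemma exists_le_mean (T : finType) (x0 : T) (g : T -> nat) :
  exists x, #|T| * g x <= \sum_y g y.
Proof.
exists [arg min_(x < x0) g x]; case: arg_minnP => // x _ min_x.
by rewrite -sum_nat_const leq_sum // => y _; apply: min_x.
Qed.

Lemma muln_sum_const (I : finType) (F : I -> nat) c d :
  (forall i, c * F i = d) -> c * \sum_i F i = #|I| * d.
Proof. by move=> cF; rewrite big_distrr (eq_bigr _ (fun i _ => cF i)) sum_nat_const. Qed.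

Lemma sum_eq_set1 (T : finType) (R X : {set T}) :
  X \subset R -> \sum_(j in R) (X == [set j]) = (#|X| == 1).
Proof.
have [/cards1P[x ->] | /negPf X_not1] := boolP (#|X| == 1).
  rewrite sub1set => xR; rewrite (bigD1 x) //= eqxx big1 // => j /andP[_ jx].
  by rewrite (inj_eq set1_inj) eq_sym (negPf jx).
move=> _; rewrite big1 // => j _; apply/eqP; rewrite eqb0.
by apply: contraFN X_not1 => /eqP->; rewrite cards1.
Qed.

Lemma two_subn_card (T : finType) (R X : {set T}) : X \subset R ->
  2 - #|X| = 2 * (X == set0) + \sum_(j in R) (X == [set j]).
Proof. by move/sum_eq_set1->; rewrite -cards_eq0; case: #|X| => [|[|k]]. Qed.

Section Completion.

Variables (I T : finType) (R : I -> {set T}) (k : nat).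

Definition completion_cost (S0 : {set T}) : nat :=
  #|S0| + \sum_i (k - #|R i :&: S0|).

Lemma exists_completion (S0 : {set T}) :
    (forall i, k <= #|R i|) ->
  exists2 S : {set T}, #|S| <= completion_cost S0 & forall i, k <= #|R i :&: S|.
Proof.
move=> R_large.
have /fin_all_exists[F F_spec] (i : I) : exists F_i : {set T},
    F_i \subset R i :\: S0 /\ #|F_i| = k - #|R i :&: S0|.
  have [|B sB cardB] := @exists_subset_card _ (R i :\: S0) (k - #|R i :&: S0|).
    by rewrite cardsD leq_sub2r.
  by exists B.
exists (S0 :|: \bigcup_i F i) => [|i].
  apply: leq_trans (leq_card_setU _ _) _; rewrite leq_add2l.
  apply: leq_trans (leq_card_bigcup _) _.
  by rewrite (eq_bigr _ (fun i _ => (F_spec i).2)).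
have [sFi cardFi] := F_spec i.
have disj : [disjoint R i :&: S0 & F i].
  rewrite -setI_eq0 -subset0; apply/subsetP => x; rewrite inE => /andP[].
  by rewrite inE => /andP[_ xS0] /(subsetP sFi); rewrite inE xS0.
have sub : (R i :&: S0) :|: F i \subset R i :&: (S0 :|: \bigcup_j F j).
  apply/subsetP => x; rewrite !inE => /orP[/andP[-> ->] // | xF].
  have := subsetP sFi x xF; rewrite !inE => /andP[_ ->].
  by apply/orP; right; apply/bigcupP; exists i.
apply: leq_trans (subset_leq_card sub).
move: (eq_leqif (leq_card_setU (R i :&: S0) (F i))); rewrite disj => /eqP->.
by rewrite cardFi -leq_subLR.
Qed.

End Completion.

Section RandomFunctions.

Variables aT rT : finType.

Lemma sum_ffun_forall (F : aT -> {set rT}) :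
  \sum_(f : {ffun aT -> rT}) [forall x, f x \in F x] = \prod_x #|F x|.
Proof.
have -> : \prod_x #|F x| = #|family F|.
  by rewrite card_family foldrE big_map big_enum.
rewrite -sum1_card [RHS]big_mkcond /=; apply: eq_bigr => f _.
by case: familyP => [/forallP|/forallP/negPf] ->.
Qed.

Lemma prod_pattern (R X : {set aT}) (a b c : nat) : X \subset R ->
  \prod_x (if x \in X then a else if x \in R then b else c)
    = a ^ #|X| * b ^ #|R :\: X| * c ^ #|~: R|.
Proof.
move=> sXR; rewrite (bigID [in R]) (big_setID X) /= (setIidPr sXR) -!prod_nat_const.
congr (_ * _ * _); [apply: eq_bigr|apply: eq_bigr|apply: eq_big] => x //=.
- by move->.
- by rewrite inE => /andP[/negPf-> ->].
- by rewrite inE.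
- by move/negPf=> xR; rewrite xR; case: ifP => // /(subsetP sXR); rewrite xR.
Qed.

Definition trace_pattern (P : {set rT}) (R X : {set aT}) (x : aT) : {set rT} :=
  if x \in X then P else if x \in R then ~: P else setT.

Lemma preimset_trace_eqE (P : {set rT}) (R X : {set aT}) (f : {ffun aT -> rT}) :
  X \subset R ->
  (R :&: f @^-1: P == X) = [forall x, f x \in trace_pattern P R X x].
Proof.
move=> sXR; apply/eqP/forallP => [<- x | fX].
  rewrite /trace_pattern !inE.
  by case: (x \in R); case fxP: (f x \in P); rewrite ?inE ?fxP.
apply/setP => x; rewrite !inE; have := fX x; rewrite /trace_pattern.
case: ifP => [xX | _]; first by rewrite (subsetP sXR x xX) => ->.
by case: (x \in R); rewrite !inE // => /negPf.
Qed.

Lemma card_ffun_trace (P : {set rT}) (R X : {set aT}) : X \subset R ->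
  \sum_(f : {ffun aT -> rT}) (R :&: f @^-1: P == X)
    = #|P| ^ #|X| * #|~: P| ^ #|R :\: X| * #|rT| ^ #|~: R|.
Proof.
move=> sXR; under eq_bigr => f _ do rewrite (preimset_trace_eqE P f sXR).
rewrite sum_ffun_forall -(prod_pattern _ _ _ sXR); apply: eq_bigr => x _.
by rewrite /trace_pattern; case: (x \in X); case: (x \in R); rewrite ?cardsT.
Qed.

Lemma sum_card_preimset (P : {set rT}) :
  #|rT| * \sum_(f : {ffun aT -> rT}) #|f @^-1: P| = #|aT| * (#|P| * #|rT| ^ #|aT|).
Proof.
have col x : #|rT| * \sum_(f : {ffun aT -> rT}) (f x \in P) = #|P| * #|rT| ^ #|aT|.
  have fxP (f : {ffun aT -> rT}) : (f x \in P) = ([set x] :&: f @^-1: P == [set x]).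
    by rewrite (sameP eqP setIidPl) sub1set inE.
  under eq_bigr => f _ do rewrite fxP.
  rewrite card_ffun_trace // cards1 setDv cards0 cardsC1 expn1 muln1 mulnCA -expnS.
  by rewrite prednK //; apply/card_gt0P; exists x.
under eq_bigr => f _ do rewrite -sum1_card big_mkcond.
rewrite exchange_big big_distrr /= -sum_nat_const; apply: eq_bigr => x _.
by rewrite -(col x); under eq_bigr do rewrite inE.
Qed.

Lemma sum_ffun_deficit2 (P : {set rT}) (R : {set aT}) :
  #|rT| ^ #|R| * #|~: P| * \sum_(f : {ffun aT -> rT}) (2 - #|R :&: f @^-1: P|)
    = (2 * #|~: P| + #|R| * #|P|) * #|~: P| ^ #|R| * #|rT| ^ #|aT|.
Proof.
under eq_bigr => f _ do rewrite (two_subn_card (subsetIl R (f @^-1: P))).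
rewrite big_split /= -big_distrr /= exchange_big /= card_ffun_trace ?sub0set //.
rewrite cards0 setD0 expn0 mul1n.
have hit j : j \in R ->
    #|~: P| * \sum_(f : {ffun aT -> rT}) (R :&: f @^-1: P == [set j])
      = #|P| * #|~: P| ^ #|R| * #|rT| ^ #|~: R|.
  move=> jR; rewrite card_ffun_trace ?sub1set // cards1 expn1 [in RHS](cardsD1 j R) jR.
  by rewrite add1n expnS !mulnA (mulnC #|~: P|).
rewrite -mulnA mulnDr big_distrr /= (eq_bigr _ hit) sum_nat_const -(cardsC R) expnD.
ring.
Qed.

Lemma sum_completion_cost (I : finType) (R : I -> {set aT}) (P : {set rT}) r :
    (forall i, #|R i| = r) ->
  #|rT| ^ r.+1 * #|~: P| * \sum_(f : {ffun aT -> rT}) completion_cost R 2 (f @^-1: P)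
    = (#|rT| ^ r * #|~: P| * #|aT| * #|P|
       + #|rT| * #|I| * (2 * #|~: P| + r * #|P|) * #|~: P| ^ r) * #|rT| ^ #|aT|.
Proof.
move=> cardR; rewrite big_split /= exchange_big /= mulnDr.
have deficits : #|rT| ^ r * #|~: P| * \sum_i \sum_(f : {ffun aT -> rT}) (2 - #|R i :&: f @^-1: P|)
    = #|I| * ((2 * #|~: P| + r * #|P|) * #|~: P| ^ r * #|rT| ^ #|aT|).
  by apply: muln_sum_const => i; rewrite -(cardR i) sum_ffun_deficit2.
move: (sum_card_preimset P) deficits.
set sT := \sum_(f : {ffun aT -> rT}) _; set sD := \sum_i _ => preim deficits.
rewrite (_ : _ * sT = #|rT| ^ r * #|~: P| * (#|rT| * sT)); last by rewrite expnS; ring.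
rewrite (_ : _ * sD = #|rT| * (#|rT| ^ r * #|~: P| * sD)); last by rewrite expnS; ring.
rewrite preim deficits; ring.
Qed.

End RandomFunctions.

Theorem theorem3p1 (n : nat) (A : 'M[bool]_n) :
  0 < n ->
  (forall i : 'I_n, 9 <= row_weight A i) ->
  exists S : {set 'I_n},
    100 * #|S| <= 49 * n /\ (forall i : 'I_n, 2 <= sub_row_weight A S i).
Proof.
move=> _ heavy.
have /fin_all_exists2[R sR cardR] := fun i => exists_subset_card (heavy i).
pose P : {set 'I_5} := [set ord0; ord_max].
have cardP : #|P| = 2 by rewrite cards2.
have cardCP : #|~: P| = 3 by apply/eqP; rewrite -(eqn_add2l 2) -{1}cardP cardsC card_ord.
pose cost (f : {ffun 'I_n -> 'I_5}) := completion_cost R 2 (f @^-1: P).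
have [f f_mean] := exists_le_mean [ffun=> ord0] cost.
have := sum_completion_cost P cardR; rewrite !card_ord cardP cardCP => sum_cost.
rewrite card_ffun !card_ord in f_mean.
(* (6 * 5^9 + 120 * 3^9) / (15 * 5^9) = 0.4806... < 0.49 *)
have cost_f : 100 * cost f <= 49 * n.
  have : 5 ^ n * (5 ^ 10 * 3 * cost f) <= 5 ^ n * (n * (6 * 5 ^ 9 + 120 * 3 ^ 9)).
    by move: f_mean sum_cost; set s := \sum_(g : {ffun 'I_n -> 'I_5}) _; nia.
  by rewrite leq_pmul2l ?expn_gt0 //; lia.
have R_large i : 2 <= #|R i| by rewrite cardR.
have [S S_small S_cover] := exists_completion (f @^-1: P) R_large.
exists S; split; first by apply: leq_trans cost_f; rewrite leq_mul2l S_small orbT.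
move=> i; apply: leq_trans (S_cover i) (subset_leq_card _).
apply/subsetP=> j; rewrite !inE => /andP[jR ->].
by have := subsetP (sR i) j jR; rewrite inE.
Qed.
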